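(* Let $k$ be a positive integer. For any odd prime $p>k$, the rational number $P_k(1,4,0)$ satisfies $P_k(1,4,0)\not\equiv0\pmod p$ (i.e. it is a $p$-adic unit).
   Context: Define $\widetilde c_n\in\mathbb Q[\beta]$ by $\widetilde c_0=2$, $\widetilde c_1=1$, $(n+1)\widetilde c_{n+1}=\widetilde c_n+\frac\beta4(n-1)\widetilde c_{n-1}$ for $n\ge1$, and $\widetilde c_n=0$ for $n<0$. Then $P_k(1,\beta,0)$ is the $k\times k$ determinant with $(j,l)$ entry $\widetilde c_{k-2(j-1)+(l-1)}$, $1\le j,l\le k$. (These $\widetilde c_n$ are the specializations $h=1,\gamma=0$ of polynomials $c_n(h,\beta,\gamma)$ with $c_0=2$ and $\log(1+\sum_{n\ge1}c_nt^n)=\sum_{m\ge1}(-1)^{m-1}(m-1)!\mathrm{ch}_mt^m$, $\mathrm{ch}_1=h$, $\mathrm{ch}_{2n}=0$, $\mathrm{ch}_{2n-1}=\frac1{(2n-1)!}(\frac{\beta h}4-\frac{n-1}2\gamma)(\frac\beta4)^{n-2}$ for $n\ge2$, and $P_k(h,\beta,\gamma)=\det(c_{k-2(j-1)+(l-1)})$.) *)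

From HB Require Import structures.
From mathcomp Require Import all_boot all_order all_algebra.
Set Implicit Arguments. Unset Strict Implicit. Unset Printing Implicit Defensive.
Import Order.TTheory GRing.Theory Num.Theory.
Local Open Scope ring_scope.

(* ctil_pair beta m = (c~_m, c~_(m+1)) where c~_0 = 2, c~_1 = 1 and
   (n+1) c~_(n+1) = c~_n + (beta/4) (n-1) c~_(n-1)  for n >= 1. *)
Fixpoint ctil_pair (beta : rat) (m : nat) : rat * rat :=
  match m with
  | 0%N => (2%:R, 1)
  | m'.+1 =>
      let '(a, b) := ctil_pair beta m' in
      (b, (b + beta / 4%:R * m'%:R * a) / (m'.+2)%:R)
  end.

Definition ctil (beta : rat) (n : int) : rat :=
  match n with
  | Posz m => (ctil_pair beta m).1
  | Negz _ => 0
  end.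

(* P_k(1, beta, 0) = det (c~_(k - 2(j-1) + (l-1)))_{1 <= j,l <= k};
   with 0-based indices j, l < k the entry is c~_(k - 2 j + l). *)
Definition Pk (beta : rat) (k : nat) : rat :=
  \det (\matrix_(j < k, l < k) ctil beta (k%:Z - 2 * (j : nat)%:Z + (l : nat)%:Z)).

Definition padic_unit (p : nat) (q : rat) : bool :=
  ~~ (p %| `|numq q|)%N && ~~ (p %| `|denq q|)%N.

From mathcomp Require Import all_boot all_order all_algebra.
From mathcomp Require Import fingroup perm zify ring lra.
Set Implicit Arguments. Unset Strict Implicit. Unset Printing Implicit Defensive.
Import Order.TTheory GRing.Theory Num.Theory.
Local Open Scope ring_scope.

(* For beta = 4 the recurrence is solved by c~_0 = 2 and c~_n = C(2r, r) / 4^r with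
   r = floor(n/2) for n >= 1, so c~_(2q+1) - c~_(2q) vanishes except for q = 0, where it
   is -1.  Subtracting these neighbouring columns and reordering the columns makes the
   matrix of P_k block lower triangular, with diagonal blocks -I and (up to a row
   reversal) the Hankel matrix (C(2s, s) / 4^s)_(i,j) with s = e + i + j, e in {0, 1}.
   Folding Vandermonde's identity factors that Hankel matrix as L D L^T with L triangular
   of diagonal 4^-i and D diagonal with entries in {1, 2} / 4^e.  Hence P_k(1,4,0) is a
   signed power of 2, a unit at every odd prime. *)

Definition pm_pow2 (x : rat) :=
  exists (b : bool) (u v : nat), x = (-1) ^+ b * (2%:R ^+ u / 2%:R ^+ v).

Lemma pm_pow2M x y : pm_pow2 x -> pm_pow2 y -> pm_pow2 (x * y).
Proof.
move=> [b1 [u1 [v1 ->]]] [b2 [u2 [v2 ->]]].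
exists (b1 (+) b2), (u1 + u2)%N, (v1 + v2)%N.
by rewrite !exprD signr_addb invfM; ring.
Qed.

Lemma pm_pow2_sign (b : bool) : pm_pow2 ((-1) ^+ b).
Proof. by exists b, 0%N, 0%N; rewrite !expr0 invr1 !mulr1. Qed.

Lemma pm_pow2_exp2 (u : nat) : pm_pow2 (2%:R ^+ u).
Proof. by exists false, u, 0%N; rewrite expr0 invr1 mulr1 mul1r. Qed.

Lemma pm_pow2_exp4V (u : nat) : pm_pow2 (4%:R ^+ u)^-1.
Proof.
exists false, 0%N, u.*2.
by rewrite expr0 !mul1r -mul2n exprM -natrX.
Qed.

Lemma pm_pow2_prod (I : finType) (F : I -> rat) :
  (forall i, pm_pow2 (F i)) -> pm_pow2 (\prod_i F i).
Proof.
move=> PF; apply: (big_ind pm_pow2) => //; last exact: pm_pow2M.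
exact: (pm_pow2_sign false).
Qed.

Lemma prime_odd_ndvd_exp2 p u : prime p -> odd p -> ~~ (p %| 2 ^ u)%N.
Proof.
move=> p_pr p_odd; rewrite Euclid_dvdX // negb_and; apply/orP; left.
by rewrite dvdn_prime2 //; apply: contraTN p_odd => /eqP ->.
Qed.

Lemma pm_pow2_padic_unit p x : prime p -> odd p -> pm_pow2 x -> padic_unit p x.
Proof.
move=> p_pr p_odd [b [u [v ->]]].
have ndvd1 : ~~ (p %| 1)%N by rewrite dvdn1; apply: contraTN p_pr => /eqP ->.
case: (leqP v u) => [le_vu | lt_uv].
  have -> : (-1) ^+ b * (2%:R ^+ u / 2%:R ^+ v) = ((-1) ^+ b * 2 ^+ (u - v) : int)%:~R :> rat.
    by rewrite rmorphM /= rmorph_sign rmorphXn /= (expfB_cond (m := u)).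
  rewrite /padic_unit numq_int denq_int /= ndvd1 andbT abszM abszX abszX.
  by rewrite /= exp1n mul1n prime_odd_ndvd_exp2.
pose z : int := (-1) ^+ b * 2 ^+ (v - u).
have -> : (-1) ^+ b * (2%:R ^+ u / 2%:R ^+ v) = (z%:~R)^-1 :> rat.
  rewrite rmorphM /= rmorph_sign rmorphXn /= invfM invr_sign.
  rewrite -{1}(subnKC (ltnW lt_uv)) exprD; field.
  by rewrite !expf_neq0 // pnatr_eq0.
have z_neq0 : z != 0 by rewrite mulf_neq0 ?signr_eq0 // expf_neq0.
have -> : z%:~R^-1 = (1%:~R / z%:~R : rat) by rewrite mul1r.
rewrite /padic_unit coprimeq_num ?coprimeq_den ?coprime1n // (negPf z_neq0).
rewrite mulr1 absz_sg z_neq0 ndvd1 -abszE /= abszM abszX abszX /= exp1n mul1n.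
exact: prime_odd_ndvd_exp2.
Qed.

Definition nbinc (r : nat) : rat := 'C(r.*2, r)%:R / 4%:R ^+ r.

Lemma mul_bin_central_succ r : (r.+1 * 'C(r.+1.*2, r.+1) = 2 * (r.*2.+1 * 'C(r.*2, r)))%N.
Proof.
have sym : 'C(r.*2.+1, r.+1) = 'C(r.*2.+1, r).
  by rewrite -bin_sub; [congr 'C(_, _); rewrite -addnn; lia | lia].
have := mul_bin_diag r.*2.+1 r; rewrite /= sym => diag1.
by rewrite doubleS -(mul_bin_diag r.*2.+2 r) /= diag1; nia.
Qed.

Lemma nbinc_succ r : (r.*2.+2)%:R * nbinc r.+1 = (r.*2.+1)%:R * nbinc r.
Proof.
have /(congr1 (fun n : nat => n%:R : rat)) := mul_bin_central_succ r.
rewrite !natrM /nbinc => key.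
have q_neq0 : (4%:R : rat) ^+ r != 0 by rewrite expf_neq0 // pnatr_eq0.
have -> : (r.*2.+2)%:R = 2%:R * (r.+1)%:R :> rat by rewrite -natrM mul2n doubleS.
rewrite exprS; set q := _ ^+ r in q_neq0 *; set X := 'C(_, _)%:R; set Y := 'C(_, _)%:R in key *.
rewrite (_ : _ * _ * _ = (r.+1)%:R * X * (2%:R / (4%:R * q))); last by field.
by rewrite key; field.
Qed.

Definition ctil4 (n : nat) : rat := if n is 0%N then 2%:R else nbinc n./2.

Lemma ctil4_odd r : ctil4 r.*2.+1 = nbinc r.
Proof. by rewrite /ctil4 /= uphalf_double. Qed.

Lemma ctil4_even r : ctil4 r.+1.*2 = nbinc r.+1.
Proof. by rewrite /ctil4 doubleS /= doubleK. Qed.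

Lemma ctil4_rec n : (n.+2)%:R * ctil4 n.+2 = ctil4 n.+1 + n%:R * ctil4 n.
Proof.
case: n => [|n]; first by rewrite /ctil4 /nbinc /= mul0r addr0.
have [r [-> | ->]] : exists r, n = r.*2 \/ n = r.*2.+1.
  exists n./2; move: (odd_double_half n); set h := n./2.
  by case: (odd n) => <-; [right | left].
- rewrite -[r.*2.+3]/(r.+1.*2.+1) -[r.*2.+2]/(r.+1.*2) !ctil4_odd ctil4_even.
  by rewrite -(nbinc_succ r) -[r.+1.*2.+1]/(r.*2.+2).+1 -natr1 mulrDl mul1r addrC.
- rewrite -[r.*2.+4]/(r.+2.*2) -[r.*2.+3]/(r.+1.*2.+1) -[r.*2.+2]/(r.+1.*2).
  rewrite !ctil4_even ctil4_odd (nbinc_succ r.+1).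
  by rewrite -[r.+1.*2.+1]/(r.+1.*2).+1 -natr1 mulrDl mul1r addrC.
Qed.

Lemma ctil_pair4 n : ctil_pair 4%:R n = (ctil4 n, ctil4 n.+1).
Proof.
elim: n => [|n IH]; first by rewrite /= /ctil4 /nbinc /= expr0 divr1.
by rewrite /= IH divff ?pnatr_eq0 // mul1r -ctil4_rec [_%:R * _]mulrC mulfK ?pnatr_eq0.
Qed.

Lemma ctil4_gt0 (w : nat) : (0 < w)%N -> ctil 4%:R w%:Z = nbinc w./2.
Proof. by rewrite /ctil ctil_pair4; case: w. Qed.

Lemma ctil_lt0 beta (z : int) : z < 0 -> ctil beta z = 0.
Proof. by case: z. Qed.

Lemma ctil4_oddB (q : int) : ctil 4%:R (2 * q + 1) - ctil 4%:R (2 * q) = - (q == 0)%:R.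
Proof.
case: q => [[|r]|r].
- by rewrite /ctil /=; lra.
- have -> : 2 * (r.+1)%:Z + 1 = (r.+1.*2.+1)%:Z by rewrite -addnn; lia.
  have -> : 2 * (r.+1)%:Z = (r.+1.*2)%:Z by rewrite -addnn; lia.
  by rewrite /ctil !ctil_pair4 ctil4_odd ctil4_even subrr oppr0.
- by rewrite !ctil_lt0 ?subrr ?oppr0 //; rewrite NegzE; lia.
Qed.

Section CentralVandermonde.
Variables i t e : nat.
Let X := (i.*2 + e)%N.
Let Y := (t.*2 + e)%N.

Lemma Vandermonde_central : 'C((i + t + e).*2, i + t + e) =
  (\sum_(0 <= s < i.+1) 'C(X, i + e + s) * 'C(Y, t + e + s)
   + \sum_(0 <= s < t + e) 'C(X, i.+1 + s) * 'C(Y, t.+1 + s))%N.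
Proof.
have -> : (i + t + e).*2 = (X + Y)%N by rewrite /X /Y -!addnn; lia.
rewrite -binomial.Vandermonde.
rewrite -(big_mkord xpredT (fun r => 'C(X, r) * 'C(Y, i + t + e - r))%N).
rewrite (@big_cat_nat _ _ _ i.+1) //=; last by lia.
congr (_ + _)%N.
  rewrite big_nat_rev /=; apply: eq_big_nat => r /andP[_ lt_ri].
  rewrite -(@bin_sub X (i + e + r)); last by rewrite /X -addnn; lia.
  by congr ('C(_, _) * 'C(_, _))%N; rewrite /X -?addnn; lia.
rewrite -{1}[i.+1]add0n big_addn (_ : (i + t + e).+1 - i.+1 = t + e)%N; last by lia.
apply: eq_big_nat => r /andP[_ lt_r].
rewrite -(@bin_sub Y (t.+1 + r)); last by rewrite /Y -addnn; lia.
by congr ('C(_, _) * 'C(_, _))%N; rewrite /X /Y -?addnn; lia.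
Qed.

End CentralVandermonde.

Lemma sum_nat_trunc K N (F : nat -> nat) : (K <= N)%N ->
  (forall s, (K <= s)%N -> F s = 0%N) ->
  (\sum_(0 <= s < N) F s = \sum_(0 <= s < K) F s)%N.
Proof.
move=> le_KN F0; rewrite (big_cat_nat (leq0n K) le_KN) /= [X in (_ + X)%N]big1_seq ?addn0 //.
by move=> s /andP[_]; rewrite mem_index_iota => /andP[le_Ks _]; exact: F0.
Qed.

Definition hweight (e s : nat) : nat := if (e == 0%N) && (s == 0%N) then 1 else 2.

(* Vandermonde's summand for C(X + Y, i + t + e) is symmetric about r = i + e/2; folding
   it counts every term twice, except the central one when e = 0. *)
Lemma sum_hweight_bin e i t N : (e <= 1)%N -> (i < N)%N -> (t < N)%N ->
  (\sum_(0 <= s < N) hweight e s * ('C(i.*2 + e, i + e + s) * 'C(t.*2 + e, t + e + s))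
   = 'C((i + t + e).*2, i + t + e))%N.
Proof.
move=> le_e1 lt_iN lt_tN; rewrite Vandermonde_central.
pose f s := ('C(i.*2 + e, i + e + s) * 'C(t.*2 + e, t + e + s))%N.
rewrite [in LHS](eq_bigr (fun s => hweight e s * f s)%N) // [in RHS](eq_bigr f) //.
have f0_i s : (i < s)%N -> f s = 0%N.
  by move=> lt_is; rewrite /f bin_small ?mul0n // -addnn; lia.
have f0_t s : (t < s)%N -> f s = 0%N.
  by move=> lt_ts; rewrite /f [X in (_ * X)%N]bin_small ?muln0 // -addnn; lia.
have -> : (\sum_(0 <= s < i.+1) f s = \sum_(0 <= s < N) f s)%N.
  by symmetry; apply: sum_nat_trunc.
have N_gt0 : (0 < N)%N by lia.
case: e le_e1 @f f0_i f0_t => [|[|//]] _ f f0_i f0_t.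
- have -> : (\sum_(0 <= s < t + 0) 'C(i.*2 + 0, i.+1 + s) * 'C(t.*2 + 0, t.+1 + s)
             = \sum_(0 <= s < N.-1) f s.+1)%N.
    rewrite (@sum_nat_trunc t N.-1) ?addn0; [|by rewrite -ltnS prednK | by move=> s ?; apply: f0_t; lia].
    by apply: eq_big_nat => s _; rewrite /f !addn0 !addSn !addnS.
  rewrite [in LHS]big_ltn // [in RHS]big_ltn // !big_add1 -big_distrr /= mul1n; lia.
- rewrite -big_distrr /= mul2n -addnn (sum_nat_trunc lt_tN f0_t) addn1.
  by congr (_ + _)%N; apply: eq_big_nat => s _; rewrite /f !addn1.
Qed.

Section HankelCentralBinomial.
Variables e N : nat.
Hypothesis le_e1 : (e <= 1)%N.
Let L := \matrix_(i < N, s < N) ('C(i.*2 + e, i + e + s)%:R / 4%:R ^+ i : rat).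
Let d := \row_(s < N) ((hweight e s)%:R / 4%:R ^+ e : rat).

Lemma hankel_nbinc_LDLt :
  \matrix_(i < N, t < N) nbinc (e + i + t) = L *m diag_mx d *m L^T.
Proof.
apply/matrixP => i t; rewrite mul_mx_diag !mxE.
have := sum_hweight_bin le_e1 (ltn_ord i) (ltn_ord t); rewrite big_mkord => sum_bin.
under eq_bigr => s _ do rewrite !mxE.
rewrite (eq_bigr (fun s : 'I_N => (hweight e s * ('C(i.*2 + e, i + e + s)
    * 'C(t.*2 + e, t + e + s)))%:R * (4%:R ^+ i * 4%:R ^+ t * 4%:R ^+ e)^-1)); last first.
  by move=> s _; rewrite !natrM !invfM; ring.
rewrite -big_distrl /= -natr_sum sum_bin /nbinc (_ : (e + i + t) = (i + t + e))%N; last by lia.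
by rewrite !exprD.
Qed.

Lemma pm_pow2_det_binc_tri : pm_pow2 (\det L).
Proof.
rewrite det_trig; last first.
  by apply/is_trig_mxP => i s lt_is; rewrite mxE bin_small ?mul0r // -addnn; lia.
apply: pm_pow2_prod => i; rewrite mxE (_ : (i + e + i) = i.*2 + e)%N; last by rewrite -addnn; lia.
by rewrite binn mul1r; exact: pm_pow2_exp4V.
Qed.

Lemma pm_pow2_det_hankel_nbinc :
  pm_pow2 (\det (\matrix_(i < N, t < N) nbinc (e + i + t))).
Proof.
rewrite hankel_nbinc_LDLt !det_mulmx det_tr det_diag.
apply: pm_pow2M; first apply: pm_pow2M; try exact: pm_pow2_det_binc_tri.
apply: pm_pow2_prod => s; rewrite mxE; apply: pm_pow2M; last exact: pm_pow2_exp4V.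
by rewrite /hweight; case: ifP => _; [exact: (pm_pow2_exp2 0) | exact: (pm_pow2_exp2 1)].
Qed.

End HankelCentralBinomial.

Lemma det_colsub_perm (R : comPzRingType) n (f : 'I_n -> 'I_n) (A : 'M[R]_n) :
  injective f -> exists b : bool, \det A = (-1) ^+ b * \det (colsub f A).
Proof.
move=> f_inj; have -> : colsub f A = col_perm (perm f_inj) A.
  by apply/matrixP => i j; rewrite !mxE permE.
exists (odd_perm (perm f_inj)^-1).
by rewrite col_permE det_mulmx det_perm mulrCA -signr_addb addbb mulr1.
Qed.

Lemma det_rowsub_perm (R : comPzRingType) n (f : 'I_n -> 'I_n) (A : 'M[R]_n) :
  injective f -> exists b : bool, \det A = (-1) ^+ b * \det (rowsub f A).
Proof.
move=> f_inj; have -> : rowsub f A = row_perm (perm f_inj) A.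
  by apply/matrixP => i j; rewrite !mxE permE.
exists (odd_perm (perm f_inj)).
by rewrite row_permE det_mulmx det_perm mulrA -signr_addb addbb mul1r.
Qed.

Lemma det1B_strict_upper (R : comPzRingType) n (F : 'M[R]_n) :
  (forall i j : 'I_n, (j <= i)%N -> F i j = 0) -> \det (1%:M - F) = 1.
Proof.
move=> F_upper; rewrite -det_tr det_trig; last first.
  apply/is_trig_mxP => i j lt_ij; rewrite !mxE F_upper ?(ltnW lt_ij) // subr0.
  by rewrite eq_sym -val_eqE (ltn_eqF lt_ij).
by rewrite big1 // => i _; rewrite !mxE eqxx F_upper // subr0.
Qed.

Section ColumnReduction.
Variables m d : nat.
Hypothesis le_d1 : (d <= 1)%N.
Let n := (m + d + m)%N.
Let M := \matrix_(j < n, l < n) ctil 4%:R (n%:Z - 2 * (j : nat)%:Z + (l : nat)%:Z).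
Let diffcol (y : nat) := odd (y + d) && (d < y)%N.
(* Right multiplication by 1 - F subtracts from every column l with l + d odd and l > d
   its left neighbour; colorder then lists the other columns first. *)
Let F := \matrix_(x < n, y < n) ((diffcol y && (x.+1 == y))%:R : rat).

Lemma det_colop : \det M = \det (M *m (1%:M - F)).
Proof.
rewrite det_mulmx det1B_strict_upper ?mulr1 // => x y le_yx.
by rewrite mxE (_ : (x.+1 == y) = false) ?andbF //; apply/negbTE; rewrite neq_ltn; lia.
Qed.

Lemma colop_entry j (y : 'I_n) : (M *m (1%:M - F)) j y =
  M j y - (if diffcol y then ctil 4%:R (n%:Z - 2 * (j : nat)%:Z + (y.-1)%:Z) else 0).
Proof.
rewrite mulmxBr mulmx1 [in LHS]mxE [(- (M *m F)) j y]mxE; congr (_ - _).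
rewrite !mxE; case: ifP => diff_y; last first.
  by rewrite big1 // => x _; rewrite !mxE diff_y mulr0.
have y_gt0 : (0 < y)%N by case/andP: diff_y; lia.
have lt_y1 : (y.-1 < n)%N by have := ltn_ord y; lia.
rewrite (bigD1 (Ordinal lt_y1)) //= big1 ?addr0.
  by rewrite !mxE diff_y prednK // eqxx mulr1.
move=> x /negbTE x_neq; rewrite !mxE diff_y /=.
case: eqP => [x1y | _]; last by rewrite mulr0.
by move: x_neq; rewrite -val_eqE /= -x1y eqxx.
Qed.

Let colorder_nat (t : nat) : nat :=
  if (t < m + d)%N then (t.*2 - d)%N else ((t - (m + d)).*2 + d.+1)%N.

Lemma colorder_lt (t : 'I_n) : (colorder_nat t < n)%N.
Proof. by have := ltn_ord t; rewrite /colorder_nat /n; case: ifP; lia. Qed.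

Let colorder (t : 'I_n) : 'I_n := Ordinal (colorder_lt t).

Lemma colorder_inj : injective colorder.
Proof.
move=> t1 t2 /(congr1 val); rewrite /= /colorder_nat => eq_t; apply: val_inj => /=.
by move: eq_t; case: ifP; case: ifP; lia.
Qed.

Let Q := colsub colorder (M *m (1%:M - F)).

Lemma colop_perm_lshift (j t : 'I_(m + d)) : Q (lshift m j) (lshift m t) = nbinc (m - j + t).
Proof.
have lt_j := ltn_ord j; have lt_t := ltn_ord t.
rewrite mxE colop_entry mxE /= /colorder_nat /= lt_t.
have -> : diffcol (t.*2 - d)%N = false.
  rewrite /diffcol; case: (posnP t) => [-> | t_gt0]; first by rewrite /= andbF.
  by rewrite (_ : (t.*2 - d + d = t.*2)%N) ?odd_double //; lia.
rewrite subr0.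
have -> : n%:Z - 2 * (j : nat)%:Z + (t.*2 - d)%N%:Z = (n + (t.*2 - d) - j.*2)%N%:Z.
  by rewrite /n -addnn; lia.
rewrite ctil4_gt0; last by rewrite /n -addnn; lia.
congr nbinc; rewrite /n.
have [-> | ->] : (n + (t.*2 - d) - j.*2 = (m - j + t).*2
                  \/ n + (t.*2 - d) - j.*2 = (m - j + t).*2.+1)%N by rewrite /n -!addnn; lia.
- by rewrite doubleK.
- by rewrite /= uphalf_double.
Qed.

Lemma colop_perm_rshift (j : 'I_n) (t : 'I_m) : Q j (rshift (m + d) t) = - (j == m + d + t :> nat)%:R.
Proof.
have lt_j := ltn_ord j; have lt_t := ltn_ord t.
rewrite mxE colop_entry mxE /= /colorder_nat /= ltnNge leq_addr /= addKn.
have -> : diffcol (t.*2 + d.+1)%N.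
  rewrite /diffcol (_ : (t.*2 + d.+1 + d = (t + d).*2.+1)%N); last by rewrite -!addnn; lia.
  by rewrite /= odd_double /=; lia.
set q : int := (m + d + t)%N%:Z - (j : nat)%:Z.
rewrite (_ : n%:Z - 2 * (j : nat)%:Z + (t.*2 + d.+1)%N%:Z = 2 * q + 1); last first.
  by rewrite /q /n -addnn; lia.
rewrite (_ : n%:Z - 2 * (j : nat)%:Z + (t.*2 + d.+1).-1%:Z = 2 * q); last first.
  by rewrite /q /n -addnn; lia.
rewrite ctil4_oddB (_ : (q == 0) = (j == m + d + t :> nat)) //.
by apply/eqP/eqP; rewrite /q; lia.
Qed.

Lemma colop_perm_block : Q = block_mx
  (\matrix_(j < m + d, t < m + d) nbinc (m - j + t)) 0 (dlsubmx Q) (-1)%:M.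
Proof.
rewrite -{1}[Q]submxK; congr block_mx; apply/matrixP => i j; rewrite [LHS]mxE [LHS]mxE.
- by rewrite colop_perm_lshift mxE.
- rewrite colop_perm_rshift mxE (_ : (lshift m i == _ :> nat) = false) ?oppr0 //.
  by apply/negbTE; have := ltn_ord i; rewrite /=; lia.
- by rewrite colop_perm_rshift !mxE /= eqn_add2l mulNrn.
Qed.

Lemma pm_pow2_Pk4_split : pm_pow2 (Pk 4%:R n).
Proof.
rewrite /Pk -/M det_colop.
have [b1 ->] := det_colsub_perm (M *m (1%:M - F)) colorder_inj.
rewrite -/Q colop_perm_block det_lblock det_scalar.
apply: pm_pow2M; first exact: pm_pow2_sign.
apply: pm_pow2M; last by rewrite -signr_odd; exact: pm_pow2_sign.
have [b2 ->] := det_rowsub_perm (\matrix_(j < m + d, t < m + d) nbinc (m - j + t)) (@rev_ord_inj _).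
apply: pm_pow2M; first exact: pm_pow2_sign.
have -> : rowsub (@rev_ord _) (\matrix_(j < m + d, t < m + d) nbinc (m - j + t))
    = \matrix_(i < m + d, t < m + d) nbinc ((1 - d) + i + t).
  by apply/matrixP => i t; rewrite !mxE /=; congr nbinc; have := ltn_ord i; lia.
by apply: pm_pow2_det_hankel_nbinc; lia.
Qed.

End ColumnReduction.

Lemma pm_pow2_Pk4 k : pm_pow2 (Pk 4%:R k).
Proof.
have -> : k = (k./2 + odd k + k./2)%N.
  by rewrite -{1}(odd_double_half k) -addnn; lia.
by apply: pm_pow2_Pk4_split; case: (odd k).
Qed.

Theorem lemma4p5 (k p : nat) :
  (0 < k)%N -> prime p -> odd p -> (k < p)%N ->
  padic_unit p (Pk 4%:R k).
Proof.
move=> _ p_pr p_odd _.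
exact: pm_pow2_padic_unit p_pr p_odd (pm_pow2_Pk4 k).
Qed.
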